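(* Let $M = (E,\mathcal{I})$ be a graphic or cographic matroid with $\lvert E\rvert = m \ge 2$, let $w\colon E\to\mathbb{N}$ be a weight function, let $R\subseteq E$ with $\lvert R\rvert \le 1$ (possibly empty), and let $r$ be a positive integer. If there is no circuit $C$ of $M$ with $w(C) < r$ and $C\cap R = \emptyset$, then for every integer $\alpha\ge 2$, the number of circuits $C$ of $M$ with $R\subseteq C$ and $w(C) < \alpha r/2$ is at most $(2(m - \lvert R\rvert))^{\alpha}$.
   Context: A graphic matroid $M(G)$ of an undirected (multi)graph $G=(V,E)$ has ground set $E$ and independent sets the forests of $G$; its circuits are the simple cycles of $G$. A cographic matroid is the dual of a graphic matroid; its circuits are the inclusionwise minimal cut-sets of $G$. A circuit of a matroid is an inclusionwise minimal dependent set. For $C\subseteq E$, $w(C) := \sum_{e\in C} w(e)$. *)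

From mathcomp Require Import all_boot.
Set Implicit Arguments. Unset Strict Implicit. Unset Printing Implicit Defensive.

(* A finite multigraph: vertex type V, edge type E, and each edge e has
   endpoints (ends e).1 and (ends e).2 (loops allowed when they coincide). *)
Section Matroids.
Variables (V E : finType) (ends : E -> V * V).

Definition adj_in (F : {set E}) : rel V :=
  fun x y => [exists f in F, ((ends f == (x, y)) || (ends f == (y, x)))].

(* A forest: no edge e of F has its endpoints connected in F \ {e}
   (i.e. F contains no cycle; loops are excluded automatically). *)
Definition is_forest (F : {set E}) : bool :=
  [forall e in F, ~~ connect (adj_in (F :\ e)) (ends e).1 (ends e).2].

Definition is_basis (indep : {set E} -> bool) (B : {set E}) : bool :=
  indep B && [forall B' : {set E}, (B \proper B') ==> ~~ indep B'].

Definition dual_indep (indep : {set E} -> bool) (I : {set E}) : bool :=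
  [exists B : {set E}, is_basis indep B && [disjoint B & I]].

Definition is_circuit (indep : {set E} -> bool) (C : {set E}) : bool :=
  ~~ indep C && [forall D : {set E}, (D \proper C) ==> indep D].

Definition graph_matroid_indep (cographic : bool) : {set E} -> bool :=
  if cographic then dual_indep is_forest else is_forest.

End Matroids.

Definition wsum (E : finType) (w : E -> nat) (C : {set E}) : nat :=
  \sum_(e in C) w e.

(** Cocircuits of a graph are its bonds, and for them the bound is Karger's contraction
    argument. Choose a representative vertex in each component of G, an endpoint of the edge of
    R if there is one, and for a set F of contracted edges let k(F) count the components of
    (V, F) without representative. A bond avoiding F is determined by the union of those of
    these components that lie on the other side from their representative, so there are at
    most 2^k(F) of them. While k(F) - |R| > alpha, the components whose cut avoids R have cuts
    of weight at least r; contracting a crossing edge chosen with probability proportional to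
    its weight then keeps each light bond with probability at least 1 - alpha / (k(F) - |R|),
    and induction bounds the light bonds by C(k(F) - |R|, alpha) 2^(alpha + |R|).

    Circuits of a graph are its cycles. Walk along a cycle from an anchor edge c (the edge of
    R, if any) and mark an edge whenever the current piece would otherwise reach weight r/2;
    fewer than alpha edges get marked. A light cycle is determined by c and its oriented
    markers: between consecutive markers two such cycles follow paths of weight < r/2 with the
    same ends, and two different such paths would contain a cycle of weight < r avoiding R. *)

From Stdlib Require Import ClassicalEpsilon.
From mathcomp Require Import all_boot zify.
Set Implicit Arguments. Unset Strict Implicit. Unset Printing Implicit Defensive.

Section Connectivity.
Variables (V E : finType) (ends : E -> V * V).
Implicit Types (F B : {set E}) (X : {set V}).
Local Notation conn F := (connect (adj_in ends F)).
Local Notation forest := (is_forest ends).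

Lemma adj_inP F x y :
  reflect (exists2 f, f \in F & (ends f == (x, y)) || (ends f == (y, x)))
          (adj_in ends F x y).
Proof.
apply: (iffP existsP) => [[f /andP[fF h]]|[f fF h]]; first by exists f.
by exists f; rewrite fF.
Qed.

Lemma adj_in_sym F : symmetric (adj_in ends F).
Proof. by move=> x y; apply/adj_inP/adj_inP => -[f fF h]; exists f; rewrite // orbC. Qed.

Lemma conn_sym F x y : conn F x y = conn F y x.
Proof. exact: (sym_connect_sym (adj_in_sym F)). Qed.

Lemma conn_edge F f : f \in F -> conn F (ends f).1 (ends f).2.
Proof. by move=> fF; apply/connect1/adj_inP; exists f; rewrite -?surjective_pairing ?eqxx. Qed.

Lemma conn_sub F F' : {in F, forall f, conn F' (ends f).1 (ends f).2} ->
  forall x y, conn F x y -> conn F' x y.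
Proof.
move=> H; apply: connect_sub => x y /adj_inP[f fF /orP[] /eqP ef];
  by have := H f fF; rewrite ef // conn_sym.
Qed.

Lemma conn_mono F F' : F \subset F' -> forall x y, conn F x y -> conn F' x y.
Proof. by move=> sFF'; apply: conn_sub => f /(subsetP sFF'); apply: conn_edge. Qed.

Definition cut X := [set e | ((ends e).1 \in X) != ((ends e).2 \in X)].

Lemma conn_cross F X x y : conn F x y -> (x \in X) != (y \in X) ->
  exists2 f, f \in F & f \in cut X.
Proof.
have leave u v : conn F u v -> u \in X -> v \notin X -> exists2 f, f \in F & f \in cut X.
  case/connectP=> p; elim: p u => [|z p IH] u /=; first by move=> _ -> ->.
  case/andP=> auz pz lv uX vX; have [zX|zX] := boolP (z \in X); first exact: IH pz lv zX vX.
  by case/adj_inP: auz => f fF /orP[] /eqP ef; exists f; rewrite // inE ef /= uX (negbTE zX).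
move=> cxy; case: (boolP (x \in X)) => xX; case: (boolP (y \in X)) => yX //= _.
  exact: leave cxy xX yX.
by apply: leave yX xX; rewrite conn_sym.
Qed.

Lemma conn_setU1 F e x y : conn (e |: F) x y ->
  [\/ conn F x y, conn F x (ends e).1 /\ conn F (ends e).2 y |
      conn F x (ends e).2 /\ conn F (ends e).1 y].
Proof.
case/connectP=> p; elim: p x => [|z p IH] x /=; first by move=> _ ->; constructor 1.
case/andP=> /adj_inP[f]; rewrite in_setU1 => /orP[/eqP-> | fF] ef pz ly.
  move: (IH z pz ly); case/orP: ef => /eqP-> /= [h|[h1 h2]|[h1 h2]].
  - by constructor 2.
  - by constructor 2.
  - by constructor 1.
  - by constructor 3.
  - by constructor 1.
  - by constructor 3.
have xz : conn F x z by case/orP: ef => /eqP ef; have := conn_edge fF; rewrite ef // conn_sym.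
case: (IH z pz ly) => [h|[h1 h2]|[h1 h2]].
- by constructor 1; apply: connect_trans h.
- by constructor 2; split; first apply: connect_trans h1.
- by constructor 3; split; first apply: connect_trans h1.
Qed.

Lemma is_forestP F :
  reflect {in F, forall e, ~~ conn (F :\ e) (ends e).1 (ends e).2} (forest F).
Proof. exact: forall_inP. Qed.

Lemma forest_sub F B : F \subset B -> forest B -> forest F.
Proof.
move=> sFB /is_forestP fB; apply/is_forestP => e eF.
by apply: contra (fB e (subsetP sFB e eF)); apply/conn_mono/setSD.
Qed.

Lemma conn_not_forest B e : e \notin B -> conn B (ends e).1 (ends e).2 ->
  ~~ forest (e |: B).
Proof. by move=> eB c; apply/is_forestP => /(_ e (setU11 _ _)); rewrite setU1K ?c. Qed.

Lemma forest_setU1 B e : forest B -> e \notin B ->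
  forest (e |: B) = ~~ conn B (ends e).1 (ends e).2.
Proof.
move=> fB eB; apply/idP/idP => [|nc]; first by apply: contraL; apply: conn_not_forest.
apply/is_forestP => f; rewrite in_setU1 => /orP[/eqP-> | fB']; first by rewrite setU1K.
have eD : (e |: B) :\ f = e |: (B :\ f).
  by rewrite setDUl (setDidPl _) // disjoint_sym disjoints1 inE; apply: contraNneq eB => <-.
have sBf : B :\ f \subset B := subD1set B f.
have cf : conn B (ends f).1 (ends f).2 := conn_edge fB'.
rewrite eD; apply/negP => /conn_setU1[c|[c1 c2]|[c1 c2]].
- by move/is_forestP: fB => /(_ f fB'); rewrite c.
- move/negP: nc; apply; rewrite conn_sym in c1; rewrite conn_sym in c2.
  exact: connect_trans (conn_mono sBf c1) (connect_trans cf (conn_mono sBf c2)).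
- move/negP: nc; apply; rewrite conn_sym in cf.
  exact: connect_trans (conn_mono sBf c2) (connect_trans cf (conn_mono sBf c1)).
Qed.

Lemma basis_not_forest_setU1 B e : is_basis forest B -> e \notin B -> ~~ forest (e |: B).
Proof.
by case/andP=> _ /forallP maxB eB; apply: (implyP (maxB _)); rewrite properUr // sub1set.
Qed.

Lemma basis_conn B e : is_basis forest B -> conn B (ends e).1 (ends e).2.
Proof.
move=> bB; have [eB|eB] := boolP (e \in B); first exact: conn_edge.
have fB : forest B by case/andP: bB.
by move: (basis_not_forest_setU1 bB eB); rewrite forest_setU1 // negbK.
Qed.

Lemma maximal_forest_basis B : forest B -> (forall e, e \notin B -> ~~ forest (e |: B)) ->
  is_basis forest B.
Proof.
move=> fB maxB; rewrite /is_basis fB; apply/forallP => B'.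
apply/implyP => /properP[sBB' [e eB' eB]]; apply: contra (maxB e eB).
by apply: forest_sub; rewrite subUset sub1set eB'.
Qed.

End Connectivity.

Lemma dependent_has_circuit (T : finType) (indep : {set T} -> bool) D :
  ~~ indep D -> exists2 C, is_circuit indep C & C \subset D.
Proof.
move=> nD; have [C /minsetP[nC minC] sCD] := minset_exists (P := fun A => ~~ indep A) nD.
exists C => //; rewrite /is_circuit nC; apply/forallP => D'; apply/implyP => pD'.
apply: contraT => nD'; have eD' := minC D' nD' (proper_sub pD').
by rewrite eD' properE subxx andbF in pD'.
Qed.

Lemma wsum_sub (T : finType) (w : T -> nat) (A B : {set T}) :
  A \subset B -> wsum w A <= wsum w B.
Proof. by move=> sAB; rewrite [X in _ <= X](big_setID A) /= (setIidPr sAB) leq_addr. Qed.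

Lemma wsumU (T : finType) (w : T -> nat) (A B : {set T}) :
  wsum w (A :|: B) <= wsum w A + wsum w B.
Proof.
rewrite {1}/wsum (big_setID A) /= (setIidPr (subsetUl A B)) leq_add2l.
by apply: wsum_sub; rewrite setDUl setDv set0U subsetDl.
Qed.


(** * Bonds and contraction *)

Section Cocircuits.
Variables (V E : finType) (ends : E -> V * V).
Implicit Types (B C D : {set E}) (X : {set V}).
Local Notation conn F := (connect (adj_in ends F)).
Local Notation forest := (is_forest ends).
Local Notation coindep := (dual_indep forest).
Local Notation cut := (cut ends).

Lemma cut_dependent X : cut X != set0 -> ~~ coindep (cut X).
Proof.
case/set0Pn=> e ecut; apply/existsP => -[B /andP[bB dBcut]].
move: ecut; rewrite inE => /(conn_cross (basis_conn e bB))[f fB fcut].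
by move: (disjointFr dBcut fB); rewrite fcut.
Qed.

Lemma spanned_compl_coindep D : {in D, forall e, conn (~: D) (ends e).1 (ends e).2} -> coindep D.
Proof.
move=> connD; pose P B := forest B && (B \subset ~: D).
have P0 : P set0 by rewrite /P sub0set andbT; apply/is_forestP => e; rewrite inE.
have [B /maxsetP[/andP[fB sBD] maxB] _] := maxset_exists P0.
have maxB' e : e \notin B -> e \notin D -> ~~ forest (e |: B).
  move=> eB eD; apply: contra eB => fe.
  by rewrite -(maxB (e |: B)) ?setU11 ?subsetUr // /P fe subUset sub1set inE eD.
have connB x y : conn (~: D) x y -> conn B x y.
  apply: conn_sub => f; rewrite inE => fD; have [fB'|fB'] := boolP (f \in B).
    exact: conn_edge.
  by move: (maxB' f fB' fD); rewrite forest_setU1 // negbK.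
apply/existsP; exists B; rewrite -[D]setCK -subsets_disjoint sBD andbT.
apply: maximal_forest_basis => // e eB; have [eD|] := boolP (e \in D); last exact: maxB'.
by apply: conn_not_forest => //; apply/connB/connD.
Qed.

Lemma cocircuit_cut C : is_circuit coindep C ->
  exists S, C = cut S /\ (forall x y, conn (~: C) x y -> (x \in S) = (y \in S)).
Proof.
case/andP=> depC /forallP minC.
have [e eC ne] : exists2 e, e \in C & ~~ conn (~: C) (ends e).1 (ends e).2.
  apply/exists_inP; apply: contraR depC => /exists_inP nex; apply: spanned_compl_coindep => e eC.
  by apply/negPn/negP => ne; apply: nex; exists e.
pose S := [set y | conn (~: C) (ends e).1 y].
have closedS x y : conn (~: C) x y -> (x \in S) = (y \in S).
  move=> cxy; rewrite !inE; apply/idP/idP => h; first exact: connect_trans h cxy.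
  by apply: connect_trans h _; rewrite conn_sym.
exists S; split => //.
have sub : cut S \subset C.
  apply/subsetP => f; rewrite inE; apply: contraTT => fC.
  have cf : conn (~: C) (ends f).1 (ends f).2 by apply: conn_edge; rewrite inE.
  by rewrite (closedS _ _ cf) eqxx.
have ecut : e \in cut S by rewrite !inE connect0.
have [//|pr] := eqVproper sub.
have cutS : cut S != set0 by apply/set0Pn; exists e.
by move: (implyP (minC _) pr); rewrite (negbTE (cut_dependent cutS)).
Qed.

End Cocircuits.

Section Components.
Variables (V E : finType) (ends : E -> V * V).
Implicit Types (F G : {set E}) (X : {set V}).
Local Notation conn F := (connect (adj_in ends F)).

Definition comp F x := [set y | conn F x y].
Definition comps F := comp F @: [set: V].
Definition ncomp F := #|comps F|.

Lemma comp_eqP F x y : reflect (comp F x = comp F y) (conn F x y).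
Proof.
apply: (iffP idP) => [cxy|/setP/(_ y)]; last by rewrite !inE connect0.
apply/setP => z; rewrite !inE; apply/idP/idP => h; last exact: connect_trans cxy h.
by rewrite conn_sym in cxy; apply: connect_trans cxy h.
Qed.

Lemma cut_comp F x e : e \in cut ends (comp F x) ->
  ~~ conn F (ends e).1 (ends e).2 /\
  (comp F x = comp F (ends e).1 \/ comp F x = comp F (ends e).2).
Proof.
rewrite !inE => h; split.
  apply: contra h => c; apply/eqP; apply/idP/idP => h'; first exact: connect_trans h' c.
  by apply: connect_trans h' _; rewrite conn_sym.
have [h1|h1] := boolP (conn F x (ends e).1); first by left; apply/comp_eqP.
by right; apply/comp_eqP; move: h; rewrite (negbTE h1); case: (conn F x _).
Qed.

Definition merge_comp F e X := \bigcup_(y in X) comp (e |: F) y.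

Lemma merge_comp_comp F e x : merge_comp F e (comp F x) = comp (e |: F) x.
Proof.
apply/setP => z; apply/bigcupP/idP => [[y]|h]; last by exists x; rewrite // inE connect0.
by rewrite !inE => cxy; apply: connect_trans; apply: conn_mono cxy; apply: subsetUr.
Qed.

Lemma comps_setU1 F e : comps (e |: F) = merge_comp F e @: comps F.
Proof. by rewrite /comps -imset_comp; apply: eq_imset => x /=; rewrite merge_comp_comp. Qed.

Lemma ncomp_setU1_lt F e : ~~ conn F (ends e).1 (ends e).2 -> ncomp (e |: F) < ncomp F.
Proof.
move=> nc; rewrite /ncomp comps_setU1 ltn_neqAle leq_imset_card andbT.
apply: contra nc => /imset_injP inj; apply/comp_eqP; apply: inj; rewrite ?imset_f //.
by rewrite !merge_comp_comp; apply/comp_eqP/conn_edge/setU11.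
Qed.

Lemma ncomp_le_setU1 F e : ncomp F <= (ncomp (e |: F)).+1.
Proof.
rewrite /ncomp (cardsD1 (comp F (ends e).1)) comps_setU1 -add1n.
apply: leq_add; first by case: (_ \in _).
rewrite -(card_in_imset (f := merge_comp F e)); first exact/subset_leq_card/imsetS/subD1set.
move=> X Y; rewrite !inE => /andP[nX /imsetP[x _ eX]] /andP[nY /imsetP[y _ eY]]; subst X Y.
rewrite !merge_comp_comp => /comp_eqP/conn_setU1[c|[c1 c2]|[c1 c2]].
- exact/comp_eqP.
- by move/comp_eqP: c1 nX => ->; rewrite eqxx.
- by move/comp_eqP: c2 nY => <-; rewrite eqxx.
Qed.

Lemma ncomp_le_setU F G : ncomp F <= ncomp (G :|: F) + #|G|.
Proof.
elim: {G}#|G| {-2}G (leqnn #|G|) => [|n IH] G.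
  by rewrite leqn0 cards_eq0 => /eqP->; rewrite set0U cards0 addn0.
have [->|[e eG] cardG] := set_0Vmem G; first by rewrite set0U leq_addr.
rewrite -(setD1K eG) -setUA cardsU1 !inE eqxx /= add1n addnS -addSn.
apply: leq_trans (IH (G :\ e) _) _; first by move: cardG; rewrite (cardsD1 e) eG.
by rewrite leq_add2r; apply: ncomp_le_setU1.
Qed.

Lemma exists_anchored_rep u : exists rep : V -> V, [/\ forall x, conn [set: E] x (rep x),
  forall x y, conn [set: E] x y -> rep x = rep y & rep u = u].
Proof.
have symT : connect_sym (adj_in ends [set: E]) := sym_connect_sym (adj_in_sym _ _).
exists (fun x => if conn [set: E] x u then u else root (adj_in ends [set: E]) x); split.
- by move=> x; case: ifP => // _; apply: connect_root.
- move=> x y cxy; rewrite (same_connect symT cxy u).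
  by case: ifP => // _; apply/rootP.
- by rewrite connect0.
Qed.

End Components.

Section FreeComponents.
Variables (V E : finType) (ends : E -> V * V).
Implicit Types (F : {set E}) (X : {set V}).
Local Notation conn F := (connect (adj_in ends F)).
Local Notation comp := (comp ends).
Local Notation comps := (comps ends).
Local Notation ncomp := (ncomp ends).
Local Notation cut := (cut ends).

Variable rep : V -> V.
Hypothesis conn_rep : forall x, conn [set: E] x (rep x).
Hypothesis rep_conn_eq : forall x y, conn [set: E] x y -> rep x = rep y.

Lemma repK x : rep (rep x) = rep x.
Proof. by symmetry; apply: rep_conn_eq. Qed.

Definition reps := rep @: [set: V].
Definition free_comps F := comps F :\: comp F @: reps.

Lemma card_rep_comps F : #|comp F @: reps| = #|reps|.
Proof.
apply: card_in_imset => _ _ /imsetP[x _ ->] /imsetP[y _ ->] /comp_eqP c.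
by rewrite -(repK x) -(repK y); apply/rep_conn_eq/(conn_mono (subsetT F)).
Qed.

Lemma rep_comps_sub F : comp F @: reps \subset comps F.
Proof. by apply/subsetP => _ /imsetP[p _ ->]; apply: imset_f. Qed.

Lemma card_free_comps F : #|free_comps F| = ncomp F - #|reps|.
Proof. by rewrite cardsD (setIidPr (rep_comps_sub F)) card_rep_comps. Qed.

Lemma reps_le_ncomp F : #|reps| <= ncomp F.
Proof. by rewrite -(card_rep_comps F); apply/subset_leq_card/rep_comps_sub. Qed.

Lemma free_compsP F X :
  reflect (exists2 x, X = comp F x & ~~ conn F x (rep x)) (X \in free_comps F).
Proof.
apply: (iffP idP).
  rewrite inE => /andP[nrep /imsetP[x _ eX]]; exists x => //.
  by apply: contra nrep; rewrite eX => /comp_eqP->; rewrite !imset_f.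
case=> x -> nc; rewrite inE [_ \in comps F]imset_f // andbT.
apply/imsetP => -[_ /imsetP[y _ ->] /comp_eqP c].
have cE : conn [set: E] x (rep y) := conn_mono (subsetT F) c.
by move: nc; rewrite (rep_conn_eq cE) repK c.
Qed.

Lemma free_comps_cut F X : X \in free_comps F -> cut X != set0.
Proof.
case/free_compsP=> x -> nc; apply/set0Pn.
have := conn_cross (X := comp F x) (conn_rep x).
by rewrite !inE connect0 nc => /(_ isT)[f _ fcut]; exists f.
Qed.

Lemma free_comps_setT : free_comps [set: E] = set0.
Proof.
by apply/setP => X; rewrite in_set0; apply/negP => /free_compsP[x _]; rewrite conn_rep.
Qed.

Lemma card_free_comps_set0 : #|free_comps set0| <= #|E|.
Proof.
have := card_free_comps [set: E].
rewrite free_comps_setT cards0 => /esym/eqP; rewrite subn_eq0 => ncompT.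
rewrite card_free_comps leq_subLR; apply: leq_trans (ncomp_le_setU ends set0 [set: E]) _.
by rewrite setU0 cardsT leq_add2r.
Qed.

Lemma card_cocircuits_disjoint F (L : {set {set E}}) :
  {in L, forall C, is_circuit (dual_indep (is_forest ends)) C && [disjoint C & F]} ->
  #|L| <= 2 ^ #|free_comps F|.
Proof.
move=> cocircuitsL; rewrite -card_powerset.
suff: L \subset (fun T => cut (cover T)) @: powerset (free_comps F).
  by move/subset_leq_card/leq_trans; apply; apply: leq_imset_card.
apply/subsetP => C /cocircuitsL /andP[cC dCF]; have [S [eC closedS]] := cocircuit_cut cC.
have closedF x y : conn F x y -> (x \in S) = (y \in S).
  by move=> c; apply/closedS/(conn_mono _ c); rewrite subsets_disjoint setCK disjoint_sym.
(* [T] has the same cut as [S] and is a union of free components of [F]. *)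
pose T := [set x | (x \in S) != (rep x \in S)].
apply/imsetP; exists (comp F @: T).
  rewrite powersetE; apply/subsetP => X /imsetP[x]; rewrite inE => hx ->.
  by apply/free_compsP; exists x => //; apply: contra hx => c; rewrite (closedF _ _ c).
have -> : cover (comp F @: T) = T.
  apply/setP => z; rewrite cover_imset; apply/bigcupP/idP => [[x]|zT]; last first.
    by exists z; rewrite // inE connect0.
  rewrite !inE => hx cxz; rewrite -(closedF _ _ cxz).
  by rewrite -(rep_conn_eq (conn_mono (subsetT F) cxz)).
apply/setP => e; rewrite eC !inE (rep_conn_eq (conn_edge ends (in_setT e))).
by case: ((ends e).1 \in S); case: ((ends e).2 \in S); case: (rep _ \in S).
Qed.

End FreeComponents.

(* (W - a r) / W increases with W, and W >= r t. *)
Lemma leq_ratio_step (N M W r t a : nat) : 0 < r -> a < t -> r * t <= W ->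
  N * (W - a * r) <= W * M -> N * (t - a) <= t * M.
Proof.
move=> r_gt0 lt_at le_rtW le_NW.
have W_gt0 : 0 < W by apply: leq_trans le_rtW; rewrite muln_gt0 r_gt0; case: t lt_at.
have ratio : (t - a) * W <= t * (W - a * r).
  by rewrite mulnBl mulnBr leq_sub2l // mulnCA leq_mul2l mulnC le_rtW orbT.
rewrite -(leq_pmul2r W_gt0) -mulnA; apply: leq_trans (leq_mul (leqnn N) ratio) _.
by rewrite mulnCA -mulnA leq_mul2l [M * W]mulnC le_NW orbT.
Qed.

Lemma ffact_le_exp n k : n ^_ k <= n ^ k.
Proof.
rewrite ffact_prod; apply: leq_trans (_ : \prod_(i < k) n <= _).
  by apply: leq_prod => i _; apply: leq_subr.
by rewrite prod_nat_const card_ord.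
Qed.

Lemma double_bin_le_exp n k : 1 < k -> 2 * 'C(n, k) <= n ^ k.
Proof.
move=> k_gt1; apply: leq_trans (ffact_le_exp n k); rewrite -bin_ffact mulnC leq_mul2l.
case: k k_gt1 => [|[|k]] // _; rewrite factS -[2]muln1 leq_mul ?fact_gt0 //.
by rewrite orbT.
Qed.

Definition contraction_bound k alpha s :=
  if s - k <= alpha then 2 ^ s else 'C(s - k, alpha) * 2 ^ (alpha + k).

Lemma contraction_bound_mono k alpha : {homo contraction_bound k alpha : a b / a <= b}.
Proof.
move=> a b le_ab; rewrite /contraction_bound.
case: ifP => ha; case: ifP => hb; try move/negbT in ha; try move/negbT in hb.
- by rewrite leq_exp2l.
- apply: leq_trans (_ : 2 ^ (alpha + k) <= _); first by rewrite leq_exp2l //; lia.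
  by rewrite leq_pmull // bin_gt0; lia.
- lia.
- by rewrite leq_mul2r leq_bin2l ?orbT // leq_sub2r.
Qed.

Lemma contraction_bound_le m k alpha : 1 < m -> k <= 1 -> 1 < alpha ->
  contraction_bound k alpha m <= (2 * (m - k)) ^ alpha.
Proof.
move=> m_gt1 k_le1 alpha_gt1; rewrite /contraction_bound expnMn; case: ifP => small.
  have [q_gt1|q_le1] := ltnP 1 (m - k).
    apply: leq_trans (_ : 2 ^ (alpha + 1) <= _); first by rewrite leq_exp2l //; lia.
    rewrite expnD expn1 leq_mul2l; apply/orP; right; apply: leq_trans (q_gt1) _.
    by rewrite -{1}[m - k]expn1 leq_exp2l; lia.
  have -> : m - k = 1 by lia.
  have -> : m = 2 by lia.
  by rewrite exp1n muln1 leq_exp2l.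
rewrite expnD mulnCA leq_mul2l; apply/orP; right.
case: k k_le1 {small} => [|[|//]] _; rewrite ?subn0 mulnC.
  by apply: leq_trans _ (double_bin_le_exp _ alpha_gt1); rewrite leq_mul2r orbT.
exact: double_bin_le_exp.
Qed.

Section ContractionBound.
Variables (V E : finType) (ends : E -> V * V).
Implicit Types (F C : {set E}) (X : {set V}).
Local Notation conn F := (connect (adj_in ends F)).
Local Notation coindep := (dual_indep (is_forest ends)).
Local Notation comp := (comp ends).
Local Notation comps := (comps ends).
Local Notation cut := (cut ends).

Variable rep : V -> V.
Hypothesis conn_rep : forall x, conn [set: E] x (rep x).
Hypothesis rep_conn_eq : forall x y, conn [set: E] x y -> rep x = rep y.
Local Notation free := (free_comps ends rep).

Variables (w : E -> nat) (R : {set E}) (r alpha : nat).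
Hypothesis r_gt0 : 0 < r.
Hypothesis alpha_gt1 : 1 < alpha.
Hypothesis cocircuit_weight :
  forall C, is_circuit coindep C -> [disjoint C & R] -> r <= wsum w C.
Hypothesis rep_tail_R : {in R, forall g, rep (ends g).1 = (ends g).1}.

Definition crossing F := [set e | ~~ conn F (ends e).1 (ends e).2] :\: R.

Lemma card_free_cut_R F :
  #|[set X in free F | ~~ [disjoint cut X & R]]| <= #|R|.
Proof.
apply: leq_trans (leq_imset_card (fun g => comp F (ends g).2) R).
apply/subset_leq_card/subsetP => X; rewrite inE -setI_eq0.
case/andP=> /(free_compsP conn_rep rep_conn_eq)[x -> nc] /set0Pn[g /setIP[gx gR]].
apply/imsetP; exists g => //.
have [_ [/comp_eqP x1|//]] := cut_comp gx; case/negP: nc.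
by rewrite (rep_conn_eq (conn_mono (subsetT F) x1)) rep_tail_R.
Qed.

Lemma free_cut_weight F X :
  X \in free F -> [disjoint cut X & R] -> r <= wsum w (cut X).
Proof.
move=> /(free_comps_cut conn_rep rep_conn_eq)/cut_dependent/dependent_has_circuit[C cC sCcut] dXR.
apply: leq_trans (wsum_sub w sCcut); apply: cocircuit_weight cC _; exact: disjointWl sCcut dXR.
Qed.

Lemma sum_comp_cut_weights F :
  \sum_(X in comps F) wsum w (cut X :\: R) <= 2 * wsum w (crossing F).
Proof.
rewrite (eq_bigr (fun X => \sum_e (e \in cut X :\: R) * w e)) => [|X _]; last first.
  by rewrite /wsum big_mkcond; apply: eq_bigr => e _; case: (_ \in _); rewrite ?mul1n.
rewrite exchange_big /wsum big_distrr [X in _ <= X]big_mkcond /=; apply: leq_sum => e _.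
rewrite -big_distrl /=; case: ifP => ecross; last first.
  rewrite big1 ?mul0n // => _ /imsetP[x _ ->]; rewrite in_setD.
  case: (boolP (e \in cut _)) => [/cut_comp[nc _]|]; last by rewrite andbF.
  by move: ecross; rewrite !inE nc andbT => ->.
rewrite leq_mul2r; apply/orP; right.
apply: leq_trans (_ : #|[set comp F (ends e).1; comp F (ends e).2]| <= 2); last first.
  by rewrite cards2; case: (_ != _).
rewrite -sum1_card big_mkcond [X in _ <= X]big_mkcond /=; apply: leq_sum => X _.
case: ifP => // /imsetP[x _ ->]; rewrite in_setD.
case: (boolP (e \in cut _)) => [ecut|]; last by rewrite andbF.
by case: (cut_comp ecut) => _ [->|->]; rewrite !inE eqxx ?orbT andbT leq_b1.
Qed.

Lemma crossing_weight_ge F : r * (#|free F| - #|R|) <= 2 * wsum w (crossing F).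
Proof.
pose good := [set X in free F | [disjoint cut X & R]].
have card_good : #|free F| - #|R| <= #|good|.
  rewrite leq_subLR -(cardsID [set X | [disjoint cut X & R]] (free F)) addnC leq_add //.
    apply: leq_trans (card_free_cut_R F); apply/eq_leq/eq_card => X.
    by rewrite !inE andbC.
  by apply/eq_leq/eq_card => X; rewrite !inE.
apply: leq_trans (leq_mul (leqnn r) card_good) _.
apply: leq_trans (sum_comp_cut_weights F); rewrite mulnC -sum_nat_const.
apply: leq_trans (_ : \sum_(X in good) wsum w (cut X :\: R) <= _).
  apply: leq_sum => X; rewrite inE => /andP[XN dXR].
  by rewrite (setDidPl dXR); exact: free_cut_weight XN dXR.
rewrite [Y in _ <= Y](big_setID good) /= (setIidPr _) ?leq_addr //.
by apply/subsetP => X; rewrite !inE => /andP[/andP[_ ->]].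
Qed.

Definition light_cocircuits F := [set C | [&& is_circuit coindep C, R \subset C,
  2 * wsum w C < alpha * r & [disjoint C & F]]].
Local Notation nlight F := #|light_cocircuits F|.

Lemma light_cocircuits_setU1 F e :
  light_cocircuits (e |: F) = [set C in light_cocircuits F | e \notin C].
Proof.
apply/setP => C; rewrite !inE -!andbA -!setI_eq0 setIUr setU_eq0.
have -> : (C :&: [set e] == set0) = (e \notin C) by rewrite setI_eq0 disjoint_sym disjoints1.
by rewrite [(e \notin C) && _]andbC.
Qed.

Lemma light_cocircuits_average F :
  nlight F * (2 * wsum w (crossing F) - alpha * r) <=
  2 * \sum_(e in crossing F) w e * nlight (e |: F).
Proof.
have -> : \sum_(e in crossing F) w e * nlight (e |: F) =
          \sum_(C in light_cocircuits F) wsum w (crossing F :\: C).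
  transitivity (\sum_(e in crossing F) \sum_(C in light_cocircuits F) (e \notin C) * w e).
    apply: eq_bigr => e _; rewrite light_cocircuits_setU1 -sum1_card big_distrr /=.
    rewrite big_mkcond [RHS]big_mkcond; apply: eq_bigr => C _; rewrite inE.
    by case: (C \in _); case: (e \in C); rewrite ?muln1 ?mul1n ?mul0n.
  rewrite exchange_big; apply: eq_bigr => C _; rewrite /wsum.
  rewrite [RHS](eq_bigl (fun e => (e \in crossing F) && (e \notin C))) => [|e]; last first.
    by rewrite in_setD andbC.
  by rewrite big_mkcondr; apply: eq_bigr => e _; case: (e \in C); rewrite ?mul1n.
rewrite -sum_nat_const [Y in _ <= Y]big_distrr /=.
apply: leq_sum => C; rewrite inE => /and4P[_ _ light _].
have : wsum w (crossing F) <= wsum w (crossing F :\: C) + wsum w C.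
  by rewrite {1}/wsum (big_setID C) /= addnC leq_add2l wsum_sub // subsetIr.
lia.
Qed.

Lemma contraction_step F : alpha < #|free F| - #|R| ->
  nlight F * (#|free F| - #|R| - alpha) <=
  (#|free F| - #|R|) * \max_(e in crossing F) nlight (e |: F).
Proof.
move=> lt_alpha; apply: leq_ratio_step r_gt0 lt_alpha (crossing_weight_ge F) _.
apply: leq_trans (light_cocircuits_average F) _.
rewrite -mulnA leq_mul2l /wsum big_distrl /=; apply: leq_sum => e ecross.
by rewrite leq_mul2l (leq_bigmax_cond (F := fun e => nlight (e |: F)) _ ecross) orbT.
Qed.

Lemma card_light_cocircuits F : nlight F <= contraction_bound #|R| alpha #|free F|.
Proof.
have base F' : #|free F'| - #|R| <= alpha ->
    nlight F' <= contraction_bound #|R| alpha #|free F'|.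
  move=> small; rewrite /contraction_bound small.
  by apply: (card_cocircuits_disjoint conn_rep rep_conn_eq) => C; rewrite inE => /and4P[-> _ _ ->].
have freeE F' := card_free_comps conn_rep rep_conn_eq F'.
have repsE F' := reps_le_ncomp conn_rep rep_conn_eq F'.
elim: {F}(ncomp ends F) {-2}F (leqnn (ncomp ends F)) => [|n IH] F le_n.
  by apply: base; rewrite freeE; move: le_n; lia.
have [small|big] := leqP (#|free F| - #|R|) alpha; first exact: base.
set t := #|free F| - #|R| in big *.
have le_max : \max_(e in crossing F) nlight (e |: F) <= 'C(t.-1, alpha) * 2 ^ (alpha + #|R|).
  apply/bigmax_leqP => e; rewrite !inE => /andP[_ nc]; have lt_ncomp := ncomp_setU1_lt nc.
  apply: leq_trans (IH _ (leq_trans lt_ncomp le_n)) _.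
  apply: leq_trans (contraction_bound_mono _ _ (_ : _ <= #|free F|.-1)) _.
    by rewrite !freeE; have := repsE (e |: F); move: lt_ncomp; lia.
  rewrite /contraction_bound; case: ifP => small.
    have -> : t.-1 = alpha by move: small big; rewrite /t; lia.
    by rewrite binn mul1n leq_exp2l //; move: small; rewrite /t; lia.
  by have -> : #|free F|.-1 - #|R| = t.-1 by rewrite /t; lia.
have := leq_trans (contraction_step big) (leq_mul (leqnn t) le_max).
rewrite mulnA mul_bin_down /contraction_bound -/t ifN -?ltnNge // -mulnA.
by rewrite [X in _ <= X -> _]mulnC leq_mul2r subn_eq0 leqNgt big.
Qed.

End ContractionBound.

Theorem cographic_circuits_bound (V E : finType) (ends : E -> V * V) (w : E -> nat)
    (R : {set E}) (r : nat) :
  2 <= #|E| -> #|R| <= 1 -> 0 < r ->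
  (forall C, is_circuit (dual_indep (is_forest ends)) C ->
     [disjoint C & R] -> r <= wsum w C) ->
  forall alpha, 1 < alpha ->
  #|[set C | is_circuit (dual_indep (is_forest ends)) C && (R \subset C)
             && (2 * wsum w C < alpha * r)]| <= (2 * (#|E| - #|R|)) ^ alpha.
Proof.
move=> E_ge2 R_le1 r_gt0 cocircuit_weight alpha alpha_gt1.
have [u tail_u] : exists u, {in R, forall g, (ends g).1 = u}.
  have [R0|[g gR]] := set_0Vmem R; last first.
    by exists (ends g).1 => g' g'R; rewrite (card_le1_eqP R_le1 g' g).
  have [e0 _] : exists e0, e0 \in [set: E] by apply/card_gt0P; rewrite cardsT; lia.
  by exists (ends e0).1 => g; rewrite R0 inE.
have [rep [conn_rep rep_conn_eq rep_u]] := exists_anchored_rep ends u.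
have rep_tail_R : {in R, forall g, rep (ends g).1 = (ends g).1} by move=> g /tail_u->.
apply: leq_trans (_ : #|light_cocircuits ends w R r alpha set0| <= _).
  by apply/eq_leq/eq_card => C; rewrite !inE -!andbA -setI_eq0 setI0 eqxx andbT.
apply: leq_trans (card_light_cocircuits conn_rep rep_conn_eq r_gt0 alpha_gt1
  cocircuit_weight rep_tail_R set0) _.
apply: leq_trans (contraction_bound_mono _ _ (card_free_comps_set0 conn_rep rep_conn_eq)) _.
exact: contraction_bound_le.
Qed.

(** * Cycles and greedy markers *)

Section Trails.
Variables (V E : finType) (ends : E -> V * V).
Implicit Types (F C : {set E}) (s : E * bool) (t : seq (E * bool)).
Local Notation conn F := (connect (adj_in ends F)).
Local Notation forest := (is_forest ends).

Definition src s := if s.2 then (ends s.1).1 else (ends s.1).2.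
Definition dst s := if s.2 then (ends s.1).2 else (ends s.1).1.

Fixpoint trail x t y : bool :=
  if t is s :: t' then (src s == x) && trail (dst s) t' y else x == y.

Definition trail_edges t := [set f in map fst t].

Lemma trail_split x t1 t2 y :
  trail x (t1 ++ t2) y -> exists z, trail x t1 z /\ trail z t2 y.
Proof.
elim: t1 x => [|s t1 IH] x /=; first by exists x; rewrite eqxx.
by case/andP=> /eqP-> /IH[z [h1 h2]]; exists z; rewrite eqxx h1.
Qed.

Lemma conn_src_dstE F s : conn F (src s) (dst s) = conn F (ends s.1).1 (ends s.1).2.
Proof. by rewrite /src /dst; case: s.2; rewrite // conn_sym. Qed.

Lemma conn_src_dst F s : s.1 \in F -> conn F (src s) (dst s).
Proof. by rewrite conn_src_dstE; apply: conn_edge. Qed.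

Lemma trail_conn F x t y : trail x t y -> {subset map fst t <= F} -> conn F x y.
Proof.
elim: t x => [|s t IH] x /=; first by move/eqP->.
case/andP=> /eqP <- tr sub; apply: connect_trans (conn_src_dst (sub _ (mem_head _ _))) _.
by apply: IH tr _ => f ft; apply: sub; rewrite inE ft orbT.
Qed.


Lemma src_dst_same_edge s s' : s.1 = s'.1 -> src s \in [:: src s'; dst s'].
Proof. by rewrite /src /dst => ->; case: s.2; case: s'.2; rewrite !inE eqxx ?orbT. Qed.

Lemma adj_in_step F x z : adj_in ends F x z -> exists2 s, s.1 \in F & src s = x /\ dst s = z.
Proof.
case/adj_inP=> f fF /orP[] /eqP ef; [exists (f, true) | exists (f, false)] => //;
  by rewrite /src /dst ef.
Qed.

Lemma conn_trail F x y : conn F x y ->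
  exists t, [/\ trail x t y, uniq (map fst t) & {subset map fst t <= F}].
Proof.
case/connectP=> p0 p0_path ->; case/shortenP: p0_path => p p_path p_uniq _.
suff [t [tr ut sub _]] : exists t, [/\ trail x t (last x p), uniq (map fst t),
    {subset map fst t <= F} & {in t, forall s, (src s \in x :: p) && (dst s \in x :: p)}].
  by exists t.
elim: p x p_path p_uniq => [|z p IH] x /=; first by exists [::]; split => //=; rewrite eqxx.
case/andP=> /adj_in_step[s sF [sx sz]] z_path /andP[xNp z_uniq].
have [t [tr ut sub inp]] := IH z z_path z_uniq.
exists (s :: t); split => /=; rewrite ?sx ?sz ?eqxx //.
- rewrite ut andbT; apply/mapP => -[s' s't /src_dst_same_edge].
  case/andP: (inp s' s't) => h1 h2; rewrite sx !inE => /orP[] /eqP ex.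
    by move: h1; rewrite -ex (negbTE xNp).
  by move: h2; rewrite -ex (negbTE xNp).
- by move=> f /[!inE] /orP[/eqP->|/sub].
- move=> s'; rewrite inE => /orP[/eqP->|/inp/andP[h1 h2]]; first by rewrite sx sz !inE !eqxx orbT.
  by rewrite !(in_cons x) h1 h2 !orbT.
Qed.

Lemma forest_trail_edge F x t y f : forest F -> trail x t y -> uniq (map fst t) ->
  {subset map fst t <= F} -> f \in F -> (f \in map fst t) = ~~ conn (F :\ f) x y.
Proof.
move=> fF tr ut sub fin; apply/idP/idP => [/mapP[s st fE]|]; last first.
  apply: contraR => nft; apply: trail_conn tr _ => g gt; rewrite !inE (sub g gt) andbT.
  by apply: contraNneq nft => <-.
subst f; case/splitPr: st tr ut sub => t1 t2 tr ut sub.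
have [z [tr1 /= /andP[/eqP zs tr2]]] := trail_split tr.
rewrite map_cat cat_uniq /= negb_or in ut; case/and4P: ut => _ /andP[s1Nt1 _] s1Nt2 _.
have sub1 : {subset map fst t1 <= F :\ s.1}.
  move=> g gt; rewrite !inE (sub g) ?map_cat ?mem_cat ?gt // andbT.
  by apply: contraNneq s1Nt1 => <-.
have sub2 : {subset map fst t2 <= F :\ s.1}.
  move=> g gt; rewrite !inE (sub g) ?map_cat ?mem_cat /= ?inE ?gt ?orbT // andbT.
  by apply: contraNneq s1Nt2 => <-.
apply/negP => cxy; move/is_forestP: fF => /(_ s.1 fin); apply/negP/negPn.
rewrite -conn_src_dstE zs conn_sym; apply: connect_trans (trail_conn tr2 sub2) _.
by rewrite conn_sym; apply: connect_trans cxy; rewrite conn_sym (trail_conn tr1 sub1).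
Qed.

Lemma forest_trails_edges_eq x y t t' : trail x t y -> trail x t' y ->
  uniq (map fst t) -> uniq (map fst t') -> forest (trail_edges t :|: trail_edges t') ->
  trail_edges t = trail_edges t'.
Proof.
move=> tr tr' ut ut' fF; apply/setP => f; rewrite !inE.
have [fin|] := boolP (f \in trail_edges t :|: trail_edges t'); last first.
  by rewrite !inE negb_or => /andP[/negbTE-> /negbTE->].
rewrite (forest_trail_edge fF tr ut _ fin) ?(forest_trail_edge fF tr' ut' _ fin) // => g gt;
  by rewrite !inE gt ?orbT.
Qed.

Lemma circuit_cycle C c : is_circuit forest C -> c \in C ->
  exists t, [/\ trail (ends c).2 t (ends c).1, uniq (map fst t), c \notin map fst t
              & C = c |: trail_edges t].
Proof.
case/andP=> depC /forallP minC cC; have fC : forest (C :\ c) := implyP (minC _) (properD1 cC).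
have : conn (C :\ c) (ends c).2 (ends c).1.
  have : ~~ forest (c |: (C :\ c)) by rewrite setD1K.
  by rewrite forest_setU1 ?setD11 // negbK conn_sym.
case/conn_trail=> t [tr ut sub]; have cNt : c \notin map fst t.
  by apply/negP => /sub; rewrite setD11.
exists t; split => //.
have sub' : c |: trail_edges t \subset C.
  by rewrite subUset sub1set cC; apply/subsetP => f /[!inE] /sub /setD1P[].
have [//|pr] := eqVproper sub'; move: (implyP (minC _) pr); apply: contraTeq => _.
apply: conn_not_forest; first by rewrite inE.
by rewrite conn_sym; apply: trail_conn tr _ => f ft; rewrite inE.
Qed.

End Trails.

Section LightTrails.
Variables (V E : finType) (ends : E -> V * V).
Implicit Types (C : {set E}) (s : E * bool) (t M : seq (E * bool)).
Local Notation forest := (is_forest ends).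
Local Notation trail := (trail ends).

Variables (w : E -> nat) (R : {set E}) (r : nat).
Hypothesis cycle_weight : forall C, is_circuit forest C -> [disjoint C & R] -> r <= wsum w C.

Definition weight t := \sum_(s <- t) w s.1.

Lemma weight_cons s t : weight (s :: t) = w s.1 + weight t.
Proof. exact: big_cons. Qed.

Lemma wsum_trail_edges t : uniq (map fst t) -> wsum w (trail_edges t) = weight t.
Proof.
move=> ut; rewrite /wsum /weight -(big_map fst xpredT w) big_uniq //.
by apply: eq_bigl => e; rewrite inE.
Qed.

Lemma light_trails_edges_eq x y t t' : trail x t y -> trail x t' y ->
  uniq (map fst t) -> uniq (map fst t') ->
  [disjoint trail_edges t & R] -> [disjoint trail_edges t' & R] ->
  2 * weight t < r -> 2 * weight t' < r -> trail_edges t = trail_edges t'.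
Proof.
move=> tr tr' ut ut' dR dR' light light'.
have [fF|nfF] := boolP (forest (trail_edges t :|: trail_edges t')).
  exact: forest_trails_edges_eq tr tr' ut ut' fF.
have [D cD sD] := dependent_has_circuit nfF.
have dD : [disjoint D & R].
  by apply: disjointWl sD _; rewrite -setI_eq0 setIUl setU_eq0 !setI_eq0 dR dR'.
have := cycle_weight cD dD; have := wsum_sub w sD.
by have := wsumU w (trail_edges t) (trail_edges t'); rewrite !wsum_trail_edges //; lia.
Qed.

(* [acc] is the weight of the current piece; an edge that would bring it to [r/2] or more
   becomes a marker and starts a new piece. *)
Fixpoint markers acc t :=
  if t is s :: t' then
    if 2 * (acc + w s.1) < r then markers (acc + w s.1) t' else s :: markers 0 t'
  else [::].

Fixpoint light_pieces acc M t : Prop :=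
  if M is m :: M' then
    exists t1 t2, [/\ t = t1 ++ m :: t2, 2 * (acc + weight t1) < r & light_pieces 0 M' t2]
  else 2 * (acc + weight t) < r.

Lemma light_pieces_cons acc s M t :
  light_pieces (acc + w s.1) M t -> light_pieces acc M (s :: t).
Proof.
case: M => [|m M] /=; first by rewrite weight_cons addnA.
by case=> t1 [t2 [-> h1 h2]]; exists (s :: t1), t2; rewrite weight_cons addnA.
Qed.

Lemma markers_light_pieces acc t : 2 * acc < r -> light_pieces acc (markers acc t) t.
Proof.
elim: t acc => [|s t IH] acc /=; first by rewrite /weight big_nil addn0.
move=> light; case: ifP => light'; first exact/light_pieces_cons/IH.
by exists [::], t; rewrite /weight big_nil addn0; split => //; apply/IH/(leq_ltn_trans _ light).
Qed.

Lemma size_markers acc t : r * size (markers acc t) <= 2 * (acc + weight t).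
Proof.
elim: t acc => [|s t IH] acc /=; first by rewrite muln0.
rewrite weight_cons addnA; case: ifP => [_|/negbT]; first exact: IH.
rewrite -leqNgt /= mulnS => heavy; rewrite mulnDr; apply: leq_add heavy (IH 0).
Qed.

Lemma markers_sub acc t : {subset markers acc t <= t}.
Proof.
elim: t acc => [|s t IH] acc //= x; case: ifP => _ => [/IH|].
  by rewrite inE => ->; rewrite orbT.
by rewrite !inE => /orP[->|/IH->]; rewrite ?orbT.
Qed.

Lemma trail_edges_cat t1 s t2 :
  trail_edges (t1 ++ s :: t2) = trail_edges t1 :|: (s.1 |: trail_edges t2).
Proof. by apply/setP => f; rewrite !inE map_cat mem_cat /= inE. Qed.

Lemma light_pieces_edges_eq M x y t t' :
  light_pieces 0 M t -> light_pieces 0 M t' -> trail x t y -> trail x t' y ->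
  uniq (map fst t) -> uniq (map fst t') ->
  [disjoint trail_edges t & R] -> [disjoint trail_edges t' & R] ->
  trail_edges t = trail_edges t'.
Proof.
elim: M x t t' => [|m M IH] x t t' /=.
  by move=> l l' tr tr' ut ut' d d'; apply: light_trails_edges_eq tr tr' ut ut' d d' l l'.
case=> t1 [t2 [-> l1 p2]] [t1' [t2' [-> l1' p2']]] tr tr' ut ut'.
have [z [tr1 /= /andP[/eqP zm tr2]]] := trail_split tr.
have [z' [tr1' /= /andP[/eqP z'm tr2']]] := trail_split tr'; subst z z'.
rewrite !map_cat !cat_uniq /= in ut ut'.
case/and3P: ut => ut1 _ /andP[_ ut2]; case/and3P: ut' => ut1' _ /andP[_ ut2'].
rewrite !trail_edges_cat -!setI_eq0 !setIUl !setU_eq0 !setI_eq0.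
case/and3P=> d1 _ d2 /and3P[d1' _ d2'].
rewrite add0n in l1 l1'.
by rewrite (light_trails_edges_eq tr1 tr1' ut1 ut1' d1 d1' l1 l1') (IH _ _ _ p2 p2' tr2 tr2').
Qed.

Definition cycle_code C c M := exists t, [/\ M = markers 0 t,
  trail (ends c).2 t (ends c).1, uniq (map fst t), c \notin map fst t & C = c |: trail_edges t].

Lemma cycle_code_exists C c : is_circuit forest C -> c \in C ->
  exists M, [/\ cycle_code C c M, c \notin map fst M & r * size M <= 2 * wsum w C].
Proof.
move=> cC cC'; have [t [tr ut cNt eC]] := circuit_cycle cC cC'.
exists (markers 0 t); split; first by exists t.
  by apply: contra cNt => /mapP[s /markers_sub st ->]; apply: map_f.
apply: leq_trans (size_markers 0 t) _; rewrite add0n leq_mul2l; apply/orP; right.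
by rewrite eC /wsum big_setU1 ?inE //= -/(wsum w _) wsum_trail_edges // leq_addl.
Qed.

Lemma cycle_code_inj c M C C' : 0 < r -> R \subset [set c] ->
  cycle_code C c M -> cycle_code C' c M -> C = C'.
Proof.
move=> r_gt0 Rc [t [-> tr ut cNt ->]] [t' [eM tr' ut' cNt' ->]]; congr (_ |: _).
have dR t0 : c \notin map fst t0 -> [disjoint trail_edges t0 & R].
  by move=> cNt0; apply: disjointWr Rc _; rewrite disjoint_sym disjoints1 inE.
have light_t0 t0 : light_pieces 0 (markers 0 t0) t0 by apply: markers_light_pieces.
have := light_t0 t'; rewrite -eM => light_t'.
exact: light_pieces_edges_eq (light_t0 t) light_t' tr tr' ut ut' (dR _ cNt) (dR _ cNt').
Qed.

End LightTrails.

Lemma card_le_size_coding (T : finType) (X : eqType) (A : {set T}) (L : seq X)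
    (code : T -> X -> Prop) :
  {in A, forall a, exists2 x, x \in L & code a x} ->
  {in A &, forall a b x, code a x -> code b x -> a = b} -> #|A| <= size L.
Proof.
move=> has_code code_inj; have [->|[a0 /has_code[x0 _ _]]] := set_0Vmem A; first by rewrite cards0.
have ex_code a : exists x, a \in A -> x \in L /\ code a x.
  by have [/has_code[x xL cx]|aNA] := boolP (a \in A); [exists x | exists x0].
pose f a := proj1_sig (constructive_indefinite_description _ (ex_code a)).
have fP a : a \in A -> f a \in L /\ code a (f a).
  by rewrite /f; case: constructive_indefinite_description.
rewrite cardE -(size_map f); apply: uniq_leq_size.
  rewrite map_inj_in_uniq ?enum_uniq // => a b; rewrite !mem_enum => aA bA fab.
  by apply: (code_inj a b aA bA (f a)); [case: (fP a aA) | rewrite fab; case: (fP b bA)].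
by move=> x /mapP[a]; rewrite mem_enum => /fP[fL _] ->.
Qed.

Section Words.
Variables (X : eqType) (letters : seq X).

Fixpoint words n : seq (seq X) :=
  if n is n'.+1 then [seq x :: s | x <- letters, s <- words n'] else [:: [::]].

Lemma size_words n : size (words n) = size letters ^ n.
Proof. by elim: n => //= n IH; rewrite size_allpairs IH expnS. Qed.

Lemma mem_words s : all (mem letters) s -> s \in words (size s).
Proof.
elim: s => [|x s IH] /=; first by rewrite inE.
by case/andP=> xS /IH sS; apply: (allpairs_f (fun x s => x :: s)).
Qed.

Definition short_words n := flatten [seq words i | i <- iota 0 n].

Lemma size_short_words n : size (short_words n) = \sum_(i < n) size letters ^ i.
Proof.
rewrite /short_words size_flatten /shape -map_comp.
rewrite (eq_map (g := fun i => size letters ^ i)) => [|i /=]; last by rewrite size_words.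
by rewrite sumnE big_map -(big_mkord xpredT (fun i => size letters ^ i)) /index_iota subn0.
Qed.

Lemma mem_short_words n s : all (mem letters) s -> size s < n -> s \in short_words n.
Proof.
move=> sS lt_sn; apply/flattenP; exists (words (size s)); last exact: mem_words.
by apply: map_f; rewrite mem_iota.
Qed.

End Words.

Theorem graphic_circuits_bound (V E : finType) (ends : E -> V * V) (w : E -> nat)
    (R : {set E}) (r : nat) :
  2 <= #|E| -> #|R| <= 1 -> 0 < r ->
  (forall C, is_circuit (is_forest ends) C -> [disjoint C & R] -> r <= wsum w C) ->
  forall alpha, 1 < alpha ->
  #|[set C | is_circuit (is_forest ends) C && (R \subset C) && (2 * wsum w C < alpha * r)]|
    <= (2 * (#|E| - #|R|)) ^ alpha.
Proof.
move=> E_ge2 R_le1 r_gt0 cycle_weight alpha alpha_gt1.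
pose steps := [seq (e, b) | e <- enum (~: R), b <- [:: true; false]].
pose anchors := if R == set0 then [set: E] else R.
have anchorsR c : c \in anchors -> R \subset [set c].
  rewrite /anchors; case: ifP => [/eqP-> _|_ cR]; first exact: sub0set.
  by apply/subsetP => g gR; rewrite inE (card_le1_eqP R_le1 g c).
pose codes := [seq (c, M) | c <- enum anchors, M <- short_words steps alpha].
apply: leq_trans (_ : size codes <= _).
  apply: (card_le_size_coding
    (code := fun C cM => R \subset [set cM.1] /\ cycle_code ends w r C cM.1 cM.2)); last first.
    move=> C C' _ _ [c M] /= [Rc code] [_ code'].
    by have := cycle_code_inj cycle_weight r_gt0 Rc code code'.
  move=> C; rewrite inE => /andP[/andP[cC RC] light].
  have [c cA cC'] : exists2 c, c \in anchors & c \in C.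
    rewrite /anchors; case: ifP => [_|/negbT/set0Pn[c cR]]; last first.
      by exists c; rewrite // (subsetP RC).
    have [C0|[c cC']] := set_0Vmem C; last by exists c; rewrite ?in_setT.
    by move: cC; rewrite C0 => /andP[/negP[]]; apply/is_forestP => e; rewrite inE.
  have [M [code cNM size_M]] := cycle_code_exists w r cC cC'.
  exists (c, M); last by split; first exact: anchorsR.
  apply: (allpairs_f (fun c M => (c, M))); first by rewrite mem_enum.
  apply: mem_short_words; last first.
    by rewrite -(ltn_pmul2l r_gt0) [r * alpha]mulnC; apply: leq_ltn_trans size_M light.
  apply/allP => s sM; rewrite [s]surjective_pairing.
  apply: (allpairs_f (fun e b => (e, b))); last by case: s.2 {sM}; rewrite !inE.
  rewrite mem_enum inE; apply: contraNN cNM => /(subsetP (anchorsR c cA)).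
  by rewrite inE => /eqP <-; apply: map_f.
rewrite size_allpairs size_short_words -cardE.
have -> : size steps = 2 * (#|E| - #|R|).
  by rewrite size_allpairs -cardE /= mulnC -(cardsC R) addKn.
set q := 2 * _; have le_anchors : #|anchors| <= q.-1.
  rewrite /anchors /q; case: ifP => [/eqP R0 | /negbT/set0Pn[g gR]].
    by rewrite cardsT R0 cards0; lia.
  have : 0 < #|R| by apply/card_gt0P; exists g.
  lia.
by apply: leq_trans (leq_mul le_anchors (leqnn _)) _; rewrite -predn_exp leq_pred.
Qed.

Theorem mainTheorem7
  (V E : finType) (ends : E -> V * V) (cographic : bool)
  (w : E -> nat) (R : {set E}) (r : nat) :
  2 <= #|E| ->
  #|R| <= 1 ->
  0 < r ->
  (forall C : {set E},
      is_circuit (graph_matroid_indep ends cographic) C ->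
      [disjoint C & R] -> r <= wsum w C) ->
  forall alpha : nat, 2 <= alpha ->
    #|[set C : {set E} | is_circuit (graph_matroid_indep ends cographic) C
                          && (R \subset C) && (2 * wsum w C < alpha * r)]|
    <= (2 * (#|E| - #|R|)) ^ alpha.
Proof.
by case: cographic; [apply: cographic_circuits_bound | apply: graphic_circuits_bound].
Qed.
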